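(* Let $n>1$ and $1\le m\le n(n-1)$ be integers, and for each integer $i\ge1$ let $e_i=(\lceil \frac{i}{n-1}\rceil,\ n-((i-1)\bmod n))$. Then $e_m$ is distinct from each of $e_1,\dots,e_{m-1}$; that is, the arc added when constructing $\mathbb G(n,m)$ from $\mathbb G(n,m-1)$ is not already an arc of $\mathbb G(n,m-1)$.
   Context: $a\bmod b\in\{0,\dots,b-1\}$ denotes the remainder. The graphs $\mathbb G(n,m)$ on vertex set $\{1,\dots,n\}$ are built inductively: $\mathbb G(n,0)$ has no arcs, and for $1\le m\le n(n-1)$, $\mathbb G(n,m)$ is obtained from $\mathbb G(n,m-1)$ by adding the arc $e_m$ (from vertex $\lceil \frac{m}{n-1}\rceil$ to vertex $n-((m-1)\bmod n)$). *)

From mathcomp Require Import all_boot.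
Set Implicit Arguments. Unset Strict Implicit. Unset Printing Implicit Defensive.

Definition ceil_div (a b : nat) : nat := (a + b.-1) %/ b.

(* The arc e_i = (ceil(i/(n-1)), n - ((i-1) mod n)), as an ordered pair
   (tail, head) of vertices in {1,...,n}. *)
Definition e_arc (n i : nat) : nat * nat :=
  (ceil_div i n.-1, n - (i.-1 %% n)).

Definition arcs_G (n m : nat) : seq (nat * nat) :=
  [seq e_arc n i | i <- iota 1 m].

(* The arc e_i is determined by the block (i-1) div (n-1) of consecutive
   indices containing i-1 and by the residue (i-1) mod n.  Two indices in the
   same block differ by less than n-1 < n, so if they also have the same
   residue mod n they coincide: i |-> e_i is injective on positive indices. *)

From mathcomp Require Import all_boot.
From mathcomp Require Import zify.

Set Implicit Arguments.
Unset Strict Implicit.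
Unset Printing Implicit Defensive.

Lemma ceil_divSn a d : 0 < d -> ceil_div a.+1 d = (a %/ d).+1.
Proof.
move=> d_gt0; rewrite /ceil_div addSn -addnS prednK // -[X in a + X]mul1n.
by rewrite divnDMl // addn1.
Qed.

Lemma ltn_sub_eq_divn d a b : 0 < d -> a <= b -> a %/ d = b %/ d -> b - a < d.
Proof.
move=> d_gt0 le_ab eq_div.
have := divn_eq a d; have := divn_eq b d.
have := ltn_pmod a d_gt0; have := ltn_pmod b d_gt0.
rewrite eq_div; lia.
Qed.

Lemma eq_modn_ltn_sub n a b : a <= b -> b - a < n -> a = b %[mod n] -> a = b.
Proof.
move=> le_ab lt_ba_n eq_mod; apply/eqP; rewrite eqn_leq le_ab /= -subn_eq0.
apply/negPn/negP; rewrite -lt0n => ba_gt0.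
have n_dvd_ba : n %| b - a by rewrite -eqn_mod_dvd // eq_mod.
by have := leq_ltn_trans (dvdn_leq ba_gt0 n_dvd_ba) lt_ba_n; rewrite ltnn.
Qed.

Lemma eq_divn_modn d n a b :
  0 < d <= n -> a %/ d = b %/ d -> a = b %[mod n] -> a = b.
Proof.
case/andP=> d_gt0 le_dn.
wlog le_ab : a b / a <= b.
  by move=> wlog_ab; case/orP: (leq_total a b) => [|le_ba eq_div eq_mod];
    [apply: wlog_ab | symmetry; apply: wlog_ab].
move=> eq_div; apply: (eq_modn_ltn_sub le_ab).
exact: leq_trans (ltn_sub_eq_divn d_gt0 le_ab eq_div) le_dn.
Qed.

Lemma e_arc_inj n : 1 < n -> {in [pred i | 0 < i] &, injective (e_arc n)}.
Proof.
move=> n_gt1 i j; rewrite !inE => i_gt0 j_gt0.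
have d_gt0 : 0 < n.-1 by rewrite -subn1 subn_gt0.
rewrite /e_arc -(prednK i_gt0) -(prednK j_gt0) !ceil_divSn //= => -[eq_div eq_head].
have eq_mod : i.-1 = j.-1 %[mod n].
  have := ltn_pmod i.-1 (ltnW n_gt1); have := ltn_pmod j.-1 (ltnW n_gt1).
  by move: eq_head; lia.
by congr _.+1; apply: eq_divn_modn eq_div eq_mod; rewrite d_gt0 leq_pred.
Qed.

Theorem lemma9 (n m : nat) :
  1 < n -> 1 <= m <= n * (n - 1) ->
  (forall i, 1 <= i < m -> e_arc n m <> e_arc n i) /\
  e_arc n m \notin arcs_G n m.-1.
Proof.
move=> n_gt1 /andP[m_gt0 _].
have new_arc i : 1 <= i < m -> e_arc n m <> e_arc n i.
  case/andP=> i_gt0 lt_im eq_arc.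
  by move: lt_im; rewrite -(e_arc_inj n_gt1 m_gt0 i_gt0 eq_arc) ltnn.
split=> //; apply/mapP=> -[i]; rewrite mem_iota => /andP[i_gt0 lt_i] /new_arc; apply.
by rewrite i_gt0 -(prednK m_gt0).
Qed.
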